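(* Under the standing setup, the Nisio semigroup $\mathscr S=(\mathscr S(t))_{t\ge0}$ of $(\mathcal P,f)$ is a semigroup of convex kernels on $\mathbb R^d$; in particular $\mathscr S(0)=I$ and $\mathscr S(s+t)=\mathscr S(s)\mathscr S(t)$ for all $s,t\ge0$. Moreover, $\mathscr S$ coincides with the semigroup envelope of $(\mathcal P,f)$.
   Context: Standing setup: $d\in\mathbb N$; vectors in $\mathbb R^d$; inequalities and suprema of vectors are componentwise; reals are identified with constant vectors. A $Q$-matrix is $q\in\mathbb R^{d\times d}$ with $q_{ii}\le0$, $q_{ij}\ge0$ ($i\ne j$), $\sum_jq_{ij}=0$. Let $\mathcal P$ be a set of $Q$-matrices and $f=(f_q)_{q\in\mathcal P}\subset\mathbb R^d$ with $\sup_{q\in\mathcal P}f_q=f_{q_0}=0$ for some $q_0\in\mathcal P$, such that $\mathcal Qu:=\sup_{q\in\mathcal P}(qu+f_q)$ is finite for every $u\in\mathbb R^d$. For $q\in\mathcal P$, $t\ge0$: $S_q(t)u_0:=e^{tq}u_0+\int_0^te^{sq}f_q\,ds$. For $h\ge0$: $\mathcal E_hu_0:=\sup_{q\in\mathcal P}S_q(h)u_0$. $P$ is the set of finite subsets $\pi\subset[0,\infty)$ with $0\in\pi$; $P_t:=\{\pi\in P:\max\pi=t\}$. For $\pi=\{t_0,\dots,t_m\}$ with $0=t_0<\dots<t_m$, $m\ge1$, $\mathcal E_\pi:=\mathcal E_{t_1-t_0}\circ\cdots\circ\mathcal E_{t_m-t_{m-1}}$, and $\mathcal E_{\{0\}}:=\mathcal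 E_0$. The Nisio semigroup of $(\mathcal P,f)$ is $\mathscr S(t)u_0:=\sup_{\pi\in P_t}\mathcal E_\pi u_0$. A kernel is a map $\mathbb R^d\to\mathbb R^d$ that is monotone (componentwise order) and maps each constant vector $\alpha$ to $\alpha$; convex means each component is convex. A semigroup is a family $(\mathscr T(t))_{t\ge0}$ of maps $\mathbb R^d\to\mathbb R^d$ with $\mathscr T(0)=I$ and $\mathscr T(s+t)=\mathscr T(s)\circ\mathscr T(t)$. The semigroup envelope of $(\mathcal P,f)$ is the semigroup $\mathscr T$ with $\mathscr T(t)u_0\ge S_q(t)u_0$ for all $t\ge0,u_0,q\in\mathcal P$, which is below (componentwise, for all $t,u_0$) every other semigroup with this domination property. *)

From Stdlib Require Import Reals List Sorted ClassicalEpsilon Factorial.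
From mathcomp Require Import all_boot.
Set Implicit Arguments.
Unset Strict Implicit.
Unset Printing Implicit Defensive.

Local Open Scope R_scope.

Definition vec (d : nat) := 'I_d -> R.
Definition mat (d : nat) := 'I_d -> 'I_d -> R.

Definition cst (d : nat) (a : R) : vec d := fun _ => a.

Definition vle (d : nat) (u v : vec d) : Prop := forall i, u i <= v i.

Definition mulv (d : nat) (q : mat d) (u : vec d) : vec d :=
  fun i => \big[Rplus/0]_(j < d) (q i j * u j).

Definition mpow (d : nat) (q : mat d) (k : nat) (u : vec d) : vec d :=
  iter k (mulv q) u.

Definition Qmatrix (d : nat) (q : mat d) : Prop :=
  (forall i, q i i <= 0) /\
  (forall i j, i != j -> 0 <= q i j) /\
  (forall i, \big[Rplus/0]_(j < d) q i j = 0).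

(* limit of a real sequence (chosen by epsilon; meaningful when it converges) *)
Definition lim (u : nat -> R) : R := epsilon (inhabits 0) (fun l => Un_cv u l).

Definition expv (d : nat) (q : mat d) (t : R) (u : vec d) : vec d :=
  fun i => lim (fun n => sum_f_R0 (fun k => t ^ k / INR (Factorial.fact k) * mpow q k u i) n).

Definition intv (d : nat) (q : mat d) (t : R) (g : vec d) : vec d :=
  fun i => epsilon (inhabits 0)
    (fun l => exists pr : Riemann_integrable (fun s => expv q s g i) 0 t,
                RiemannInt pr = l).

Definition Sq (d : nat) (f : mat d -> vec d) (q : mat d) (t : R) (u0 : vec d)
  : vec d := fun i => expv q t u0 i + intv q t (f q) i.

Definition supv (d : nat) (A : Type) (P : A -> Prop) (g : A -> vec d) : vec d :=
  fun i => epsilon (inhabits 0)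
    (fun l => is_lub (fun x => exists a, P a /\ x = g a i) l).

Definition Eh (d : nat) (P : mat d -> Prop) (f : mat d -> vec d) (h : R)
  (u0 : vec d) : vec d := supv P (fun q => Sq f q h u0).

(* a finite set pi = {t_0 < ... < t_m} is represented by the strictly increasing
   list [t_0; ...; t_m];  pi in P_t  iff  t_0 = 0 and t_m = t. *)
Definition in_Pt (t : R) (pi : list R) : Prop :=
  Sorted Rlt pi /\ head 1 pi = 0 /\ last 0 pi = t.

Fixpoint Echain (d : nat) (P : mat d -> Prop) (f : mat d -> vec d) (a : R)
  (l : list R) : vec d -> vec d :=
  match l with
  | nil => fun u => u
  | b :: rest => fun u => Eh P f (b - a) (Echain P f b rest u)
  end.

Definition Epi (d : nat) (P : mat d -> Prop) (f : mat d -> vec d) (pi : list R)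
  : vec d -> vec d :=
  match pi with
  | nil => Eh P f 0
  | t0 :: nil => Eh P f 0
  | t0 :: rest => Echain P f t0 rest
  end.

Definition Nisio (d : nat) (P : mat d -> Prop) (f : mat d -> vec d) (t : R)
  (u0 : vec d) : vec d := supv (in_Pt t) (fun pi => Epi P f pi u0).

Definition is_kernel (d : nat) (K : vec d -> vec d) : Prop :=
  (forall u v, vle u v -> vle (K u) (K v)) /\
  (forall a, K (@cst d a) = @cst d a).

Definition is_convex_map (d : nat) (K : vec d -> vec d) : Prop :=
  forall u v (lam : R), 0 <= lam <= 1 ->
    forall i, K (fun j => lam * u j + (1 - lam) * v j) i
              <= lam * K u i + (1 - lam) * K v i.

Definition is_semigroup (d : nat) (T : R -> vec d -> vec d) : Prop :=
  (forall u, T 0 u = u) /\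
  (forall s t, 0 <= s -> 0 <= t -> forall u, T (s + t) u = T s (T t u)).

Definition dominates (d : nat) (P : mat d -> Prop) (f : mat d -> vec d)
  (T : R -> vec d -> vec d) : Prop :=
  forall t u0 q, 0 <= t -> P q -> vle (Sq f q t u0) (T t u0).

Definition is_semigroup_envelope (d : nat) (P : mat d -> Prop) (f : mat d -> vec d)
  (T : R -> vec d -> vec d) : Prop :=
  is_semigroup T /\ dominates P f T /\
  (forall T' : R -> vec d -> vec d, is_semigroup T' -> dominates P f T' ->
     forall t u0, 0 <= t -> vle (T t u0) (T' t u0)).

(* Every one-step operator E_h is a supremum of the affine maps S_q(h), each of
   which is monotone, convex, fixes constants up to the nonpositive drift f_q, and
   satisfies S_q(s + t) = S_q(s) S_q(t); the supremum inherits monotonicity and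
   convexity, fixes constants thanks to f_{q_0} = 0, and is only subadditive in
   time: E_{s+t} <= E_s E_t.  Hence refining a partition can only increase E_pi,
   and any two partitions of [0, t] have a common refinement.  Splitting a
   partition of [0, s + t] at s gives S(s + t) <= S(s) S(t); conversely, a single
   partition of [0, t] nearly attains S(t) u in every coordinate at once, and
   concatenating it with a partition of [0, s] gives S(s) S(t) <= S(s + t).  The
   same telescoping against an arbitrary dominating semigroup shows minimality. *)

From Pilot Require Import Defs.
From Stdlib Require Import Reals Lra Lia FunctionalExtensionality ClassicalEpsilon Sorted.
From Coquelicot Require Import Coquelicot.
From mathcomp Require Import all_boot all_order all_algebra.
From mathcomp Require Import Rstruct.
From mathcomp Require Import ring.
Import GRing.Theory Num.Theory Order.TTheory.
Set Implicit Arguments.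
Unset Strict Implicit.
Unset Printing Implicit Defensive.
Local Open Scope R_scope.

Section MatrixAction.
Variable d : nat.
Local Open Scope ring_scope.

Definition mxq (q : mat d) : 'M[R]_d := \matrix_(i, j) q i j.
Definition colv (u : vec d) : 'cV[R]_d := \col_i u i.
Definition mxv (A : 'M[R]_d) (u : vec d) : vec d := fun i => (A *m colv u) i ord0.

Lemma mxvE A u i : mxv A u i = \sum_j A i j * u j.
Proof. by rewrite /mxv mxE; apply: eq_bigr => j _; rewrite mxE. Qed.

Lemma colv_mxv A u : colv (mxv A u) = A *m colv u.
Proof. by apply/matrixP => i j; rewrite (ord1 j) mxE. Qed.

Lemma mxvM A B u : mxv (A * B) u = mxv A (mxv B u).
Proof. by apply: functional_extensionality => i; rewrite /mxv colv_mxv -mulmxE mulmxA. Qed.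

Lemma mxv1 u : mxv 1 u = u.
Proof. by apply: functional_extensionality => i; rewrite /mxv mul1mx mxE. Qed.

Lemma mulv_mxv q u : mulv q u = mxv (mxq q) u.
Proof.
apply: functional_extensionality => i.
by rewrite mxvE /mulv; apply: eq_bigr => j _; rewrite mxE.
Qed.

Lemma mpow_mxv q k u : mpow q k u = mxv (mxq q ^+ k) u.
Proof.
elim: k => [|k IH]; first by rewrite expr0 mxv1.
by rewrite /mpow iterS -/(mpow q k u) IH mulv_mxv exprS mxvM.
Qed.

Lemma mxv_lincomb A a b u v i :
  mxv A (fun j => a * u j + b * v j) i = a * mxv A u i + b * mxv A v i.
Proof. by rewrite !mxvE !mulr_sumr -big_split /=; apply: eq_bigr => j _; ring. Qed.

Lemma mxv_ge0_mono (A : 'M[R]_d) u v :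
  (forall i j, 0 <= A i j) -> vle u v -> vle (mxv A u) (mxv A v).
Proof.
move=> A0 uv i; rewrite !mxvE; apply/RleP; apply: ler_sum => j _.
by apply: ler_wpM2l; [exact: A0 | exact/RleP].
Qed.

Lemma scalemx_exprn (t : R) (A : 'M[R]_d) k : (t *: A) ^+ k = t ^+ k *: A ^+ k.
Proof.
elim: k => [|k IH]; first by rewrite !expr0 scale1r.
by rewrite !exprS IH -!mulmxE -scalemxAl -scalemxAr scalerA.
Qed.

Lemma exprn_ge0 (A : 'M[R]_d) : (forall i j, 0 <= A i j) ->
  forall k i j, 0 <= (A ^+ k) i j.
Proof.
move=> A0; elim=> [|k IH] i j; first by rewrite expr0 mxE ler0n.
rewrite exprSr -mulmxE mxE; apply: sumr_ge0 => l _; exact: mulr_ge0.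
Qed.

Lemma norm_exprn_le (A : 'M[R]_d) (m : R) : 0 <= m -> (forall i j, `|A i j| <= m) ->
  forall k i j, `|(A ^+ k) i j| <= (d%:R * m) ^+ k.
Proof.
move=> m0 Am; elim=> [|k IH] i j.
  by rewrite expr0 expr0 mxE; case: (i == j); rewrite ?normr1 ?normr0.
rewrite exprSr mxE (le_trans (ler_norm_sum _ _ _)) //.
apply: (@le_trans _ _ (\sum_(l < d) (d%:R * m) ^+ k * m)).
  by apply: ler_sum => l _; rewrite normrM; apply: ler_pM => //; exact: IH.
by rewrite sumr_const card_ord exprSr mulr_natl -mulrnAr.
Qed.

Lemma ler_sum_entry (F : 'I_d -> R) j0 : (forall j, 0 <= F j) -> F j0 <= \sum_j F j.
Proof. by move=> F0; rewrite (bigD1 j0) //=; apply: ler_wpDr => //; exact: sumr_ge0. Qed.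

Definition mxnorm (A : 'M[R]_d) : R := \sum_i \sum_j `|A i j|.

Lemma mxnorm_ge0 (A : 'M[R]_d) : 0 <= mxnorm A.
Proof. by apply: sumr_ge0 => i _; apply: sumr_ge0 => j _; exact: normr_ge0. Qed.

Lemma norm_entry_le_mxnorm (A : 'M[R]_d) i j : `|A i j| <= mxnorm A.
Proof.
apply: (@le_trans _ _ (\sum_j' `|A i j'|)).
  by apply: (@ler_sum_entry (fun j => `|A i j|)) => ?; exact: normr_ge0.
apply: (@ler_sum_entry (fun i => \sum_j `|A i j|)) => i'.
by apply: sumr_ge0 => ? _; exact: normr_ge0.
Qed.

Definition vnorm (u : vec d) : R := \sum_j `|u j|.

Lemma vle_vnorm (u : vec d) : vle u (@cst d (vnorm u)).
Proof.
move=> i; apply/RleP; apply: (le_trans (real_ler_norm _)); first exact: num_real.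
by apply: (@ler_sum_entry (fun j => `|u j|)) => ?; exact: normr_ge0.
Qed.

End MatrixAction.

Lemma is_series_zero : is_series (fun _ : nat => 0) 0.
Proof.
apply/is_series_Reals => eps Heps; exists 0%N => n _.
rewrite sum_eq_R0 // /Rdist Rminus_0_r Rabs_R0; lra.
Qed.

Lemma is_series_sum (I : Type) (r : seq I) (F : I -> nat -> R) (L : I -> R) :
  (forall j, is_series (F j) (L j)) ->
  is_series (fun n => (\sum_(j <- r) F j n)%R) (\sum_(j <- r) L j)%R.
Proof.
move=> FL; elim: r => [|x r IH].
  rewrite big_nil; apply: (is_series_ext _ _ _ _ is_series_zero) => n; by rewrite big_nil.
rewrite big_cons; apply: (is_series_ext (fun n => plus (F x n) (\sum_(j <- r) F j n)%R)).
  by move=> n; rewrite big_cons.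
exact: is_series_plus.
Qed.

Lemma is_series_exp_pow (x : R) :
  is_series (fun k => x ^ k / INR (Factorial.fact k)) (exp x).
Proof.
apply: (is_series_ext _ _ _ _ (is_exp_Reals x)) => k.
by rewrite pow_n_pow /scal /= /mult /=.
Qed.

Lemma is_series_ge_term (a : nat -> R) (l : R) :
  (forall n, 0 <= a n) -> is_series a l -> forall n, a n <= l.
Proof.
move=> a0 al.
have Hcv : Un_cv (sum_f_R0 a) l by apply/is_series_Reals.
have Hg : Un_growing (sum_f_R0 a) by move=> m; rewrite tech5; have := a0 m.+1; lra.
case=> [|m]; first by have := growing_ineq _ _ Hg Hcv 0%N.
apply: Rle_trans (growing_ineq _ _ Hg Hcv m.+1); rewrite tech5.
have := cond_pos_sum a m a0; lra.
Qed.

Lemma exp_ge_term (y : R) n : 0 <= y -> y ^ n / INR (Factorial.fact n) <= exp y.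
Proof.
move=> y0; apply: (is_series_ge_term _ (@is_series_exp_pow y)) => m.
apply: Rmult_le_pos; first exact: pow_le.
exact/Rlt_le/Rinv_0_lt_compat/INR_fact_lt_0.
Qed.

Lemma is_RInt_sum (I : Type) (r : seq I) (c : I -> R) (F : I -> R -> R) (L : I -> R) a b :
  (forall j, is_RInt (F j) a b (L j)) ->
  is_RInt (fun x => (\sum_(j <- r) c j * F j x)%R) a b (\sum_(j <- r) c j * L j)%R.
Proof.
move=> FL; elim: r => [|x r IH].
  rewrite big_nil; apply: (is_RInt_ext (fun _ => 0)); first by move=> t _; rewrite big_nil.
  by have := @is_RInt_const _ a b 0; rewrite /scal /= /mult /= Rmult_0_r.
rewrite big_cons.
apply: (is_RInt_ext (fun t => plus (c x * F x t) (\sum_(j <- r) c j * F j t)%R)).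
  by move=> t _; rewrite big_cons.
apply: is_RInt_plus => //; exact: (is_RInt_scal _ _ _ (c x) _ (FL x)).
Qed.

Lemma lim_eq (u : nat -> R) l : Un_cv u l -> Defs.lim u = l.
Proof.
move=> ul; rewrite /Defs.lim.
exact: UL_sequence (epsilon_spec (inhabits 0) _ (ex_intro _ l ul)) ul.
Qed.

Section MatrixExponential.
Variable d : nat.
Local Open Scope ring_scope.

Definition expm_term (A : 'M[R]_d) i j k : R := (A ^+ k) i j / (k`!)%:R.
Definition expm (A : 'M[R]_d) : 'M[R]_d := \matrix_(i, j) Series (expm_term A i j).

Lemma abs_expm_term_le A i j k :
  Rle (Rabs (expm_term A i j k))
      (Rdiv (pow (Rmult (INR d) (mxnorm A)) k) (INR (Factorial.fact k))).
Proof.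
rewrite /expm_term RabsE RpowE RdivE factE !INRE RmultE normrM normfV normr_nat.
apply/RleP; apply: ler_wpM2r; first by rewrite invr_ge0.
exact: norm_exprn_le (mxnorm_ge0 A) (norm_entry_le_mxnorm A) k i j.
Qed.

Lemma ex_series_abs_expm_term A i j : ex_series (fun k => Rabs (expm_term A i j k)).
Proof.
apply: (ex_series_le _ _ _ (ex_intro _ _ (@is_series_exp_pow (INR d * mxnorm A)))) => n.
rewrite /norm /= /abs /= Rabs_Rabsolu; exact: abs_expm_term_le.
Qed.

Lemma is_series_expm A i j : is_series (expm_term A i j) (expm A i j).
Proof. by rewrite mxE; apply/Series_correct/ex_series_Rabs/ex_series_abs_expm_term. Qed.

(* Cauchy product of the two exponential series, with the binomial theorem for
   commuting matrices. *)
Lemma expmD_comm (A B : 'M[R]_d) : A * B = B * A -> expm (A + B) = expm A * expm B.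
Proof.
move=> AB; apply/matrixP => i l.
rewrite -mulmxE [RHS]mxE [LHS]mxE; apply: is_series_unique.
have H j := is_series_mult _ _ _ _ (@is_series_expm A i j) (@is_series_expm B j l)
   (@ex_series_abs_expm_term A i j) (@ex_series_abs_expm_term B j l).
apply: (is_series_ext _ _ _ _ (@is_series_sum _ (index_enum 'I_d) _ _ H)) => n.
rewrite /expm_term addrC exprDn_comm //.
rewrite summxE RdivE mulr_suml.
under eq_bigr => j _ do rewrite sum_f_R0E big_mkord.
rewrite exchange_big /=; apply: eq_bigr => k _.
have kn : (k <= n)%N by rewrite -ltnS.
have -> : B ^+ (n - k) * A ^+ k = A ^+ k * B ^+ (n - k).
  exact: (commrX k (commr_sym (commrX (n - k) AB))).
rewrite mulmxnE -mulmxE mxE -[(\sum_j _) *+ _]mulr_natr mulr_suml mulr_suml.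
apply: eq_bigr => j _.
change (Nat.sub n k) with (n - k)%N.
rewrite -(bin_fact kn) !natrM ?RdivE ?RmultE.
have h1 : (k`!)%:R != 0 :> R by rewrite pnatr_eq0 -lt0n fact_gt0.
have h2 : ((n - k)`!)%:R != 0 :> R by rewrite pnatr_eq0 -lt0n fact_gt0.
have h3 : ('C(n, k))%:R != 0 :> R by rewrite pnatr_eq0 -lt0n bin_gt0.
by field; rewrite ?h1 ?h2 ?h3.
Qed.

Lemma expm_scalar (a : R) : expm a%:M = (exp a)%:M.
Proof.
apply/matrixP => i j; rewrite !mxE; apply: is_series_unique; rewrite /expm_term.
case: (eqVneq i j) => [<-|ne].
  rewrite mulr1n; apply: (is_series_ext _ _ _ _ (@is_series_exp_pow a)) => k.
  by rewrite -rmorphXn mxE eqxx mulr1n RpowE INRE factE.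
rewrite mulr0n; apply: (is_series_ext _ _ _ _ is_series_zero) => k.
by rewrite -rmorphXn mxE (negbTE ne) mulr0n ?RdivE mul0r.
Qed.

Lemma expm0 : expm 0 = 1.
Proof. by rewrite -(raddf0 (@scalar_mx R d)) expm_scalar exp_0. Qed.

Lemma expm_ge0 (A : 'M[R]_d) : (forall i j, 0 <= A i j) -> forall i j, 0 <= expm A i j.
Proof.
move=> A0 i j; apply/RleP; rewrite mxE.
apply: (Rle_trans _ (Series (fun _ : nat => R0))).
  exact/Req_le/esym/(is_series_unique _ _ is_series_zero).
apply: Series_le.
  move=> n; split; first exact: Rle_refl.
  by apply/RleP; apply: divr_ge0; [exact: exprn_ge0 | exact: ler0n].
exact/ex_series_Rabs/ex_series_abs_expm_term.
Qed.

Definition expq (q : mat d) (t : R) : 'M[R]_d := expm (t *: mxq q).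

Lemma expqD q s t : expq q (s + t) = expq q s * expq q t.
Proof.
rewrite /expq scalerDl expmD_comm //.
by rewrite -!mulmxE -!scalemxAl -!scalemxAr !scalerA mulrC.
Qed.

Lemma expq0 q : expq q 0 = 1.
Proof. by rewrite /expq scale0r expm0. Qed.

(* Uniformization: q + c I has nonnegative entries for c large, and
   e^{tq} = e^{-tc} e^{t(q + c I)}. *)
Lemma expq_ge0 q t : Qmatrix q -> Rle 0 t -> forall i j, 0 <= expq q t i j.
Proof.
move=> [_ [qoff _]] t0 i j.
set c := \sum_i `|q i i|.
set Q := mxq q + c%:M.
have Q0 i' j' : 0 <= (t *: Q) i' j'.
  rewrite !mxE; apply: mulr_ge0; first exact/RleP.
  case: (eqVneq i' j') => [<-|ne]; last by rewrite mulr0n addr0; exact/RleP/qoff.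
  rewrite mulr1n -lerBlDr sub0r; apply: lerNnormlW.
  by apply: (@ler_sum_entry _ (fun i => `|q i i|)) => ?; exact: normr_ge0.
have -> : expq q t = expm (t *: Q + (- (t * c))%:M).
  by congr expm; apply/matrixP => i' j'; rewrite !mxE; case: (i' == j') => /=; ring.
rewrite expmD_comm; last by rewrite -!mulmxE scalar_mxC.
rewrite expm_scalar -mulmxE mul_mx_scalar mxE.
by apply: mulr_ge0; [exact/RleP/Rlt_le/exp_pos | exact: expm_ge0].
Qed.

End MatrixExponential.

Section Flow.
Variable d : nat.
Implicit Types (q : mat d) (u v g : vec d).

Lemma expvE q t u : expv q t u = mxv (expq q t) u.
Proof.
apply: functional_extensionality => i; apply: lim_eq; apply/is_series_Reals.
rewrite mxvE.
have H j := is_series_scal_r (u j) _ _ (@is_series_expm d (t *: mxq q) i j).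
apply: (is_series_ext _ _ _ _ (@is_series_sum _ (index_enum 'I_d) _ _ H)) => k.
rewrite mpow_mxv mxvE /= !RealsE mulr_sumr; apply: eq_bigr => j _.
rewrite /expm_term scalemx_exprn mxE ?RealsE; field.
by rewrite pnatr_eq0 -lt0n fact_gt0.
Qed.

Lemma expq_PSeries q t i j : expq q t i j = PSeries (expm_term (mxq q) i j) t.
Proof.
rewrite /expq mxE /PSeries; apply: Series_ext => k.
by rewrite /expm_term scalemx_exprn mxE ?RealsE; ring.
Qed.

Lemma CV_radius_expm_term q i j x :
  Rbar_lt (Rabs x) (CV_radius (expm_term (mxq q) i j)).
Proof.
apply: (Rbar_lt_le_trans _ (Rbar.Finite (Rabs x + 1))); first by rewrite /=; lra.
apply: (proj1 (CV_radius_bounded _)).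
set K := INR d * mxnorm (mxq q).
have K0 : 0 <= K by apply: Rmult_le_pos; [exact: pos_INR | exact/RleP/mxnorm_ge0].
have r0 : 0 <= Rabs x + 1 by have := Rabs_pos x; lra.
exists (exp (K * (Rabs x + 1))) => n.
rewrite Rabs_mult -RPow_abs (Rabs_right (Rabs x + 1)); last lra.
apply: Rle_trans (exp_ge_term n (Rmult_le_pos _ _ K0 r0)).
rewrite Rpow_mult_distr /Rdiv Rmult_assoc (Rmult_comm ((Rabs x + 1) ^ n)) -Rmult_assoc.
apply: Rmult_le_compat_r; [exact: pow_le | exact: abs_expm_term_le].
Qed.

Lemma continuous_expv q u i : continuity (fun t => expv q t u i).
Proof.
have -> : (fun t => expv q t u i) = (fun t => \sum_j (fun j t => expq q t i j * u j) j t)%R.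
  by apply: functional_extensionality => t; rewrite expvE mxvE.
apply: continuity_sum => j _ x.
apply: (continuity_pt_mult (fun t => expq q t i j) (fun _ => u j)); last first.
  exact: continuity_pt_const.
rewrite (functional_extensionality _ _ (fun t => expq_PSeries q t i j)).
exact/PSeries_continuity/CV_radius_expm_term.
Qed.

Lemma ex_RInt_expv q u i a b : ex_RInt (fun s => expv q s u i) a b.
Proof.
apply: ex_RInt_continuous => z _; apply/continuity_pt_filterlim; exact: continuous_expv.
Qed.

Lemma intvE q t g i : 0 <= t -> intv q t g i = RInt (fun s => expv q s g i) 0 t.
Proof.
move=> t0; rewrite /intv.
have pr := continuity_implies_RiemannInt t0 (fun x _ => continuous_expv q g i x).
have [pr' <-] := epsilon_spec (inhabits 0)
  (fun l => exists pr : Riemann_integrable (fun s => expv q s g i) 0 t, RiemannInt pr = l)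
  (ex_intro _ (RiemannInt pr) (ex_intro _ pr erefl)).
by rewrite (RInt_Reals _ _ _ pr').
Qed.

Lemma expv_lincomb q t a b u v i :
  expv q t (fun j => a * u j + b * v j) i = a * expv q t u i + b * expv q t v i.
Proof. rewrite !expvE; exact: mxv_lincomb. Qed.

Lemma expv_mono q t u v : Qmatrix q -> 0 <= t -> vle u v -> vle (expv q t u) (expv q t v).
Proof. by move=> Q t0; rewrite !expvE; apply: mxv_ge0_mono; exact: expq_ge0. Qed.

Lemma mulv_cst q a : Qmatrix q -> mulv q (@cst d a) = @cst d 0.
Proof.
move=> [_ [_ qrow]]; apply: functional_extensionality => i.
rewrite /mulv /cst.
have -> : \big[Rplus/0]_(j < d) (q i j * a) = ((\sum_(j < d) q i j) * a)%R.
  by rewrite mulr_suml.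
by rewrite qrow mul0r.
Qed.

Lemma mpowS_cst q k a : Qmatrix q -> mpow q k.+1 (@cst d a) = @cst d 0.
Proof.
move=> Q; elim: k => [|k IH]; first exact: mulv_cst.
by rewrite /mpow iterS -/(mpow q k.+1 _) IH mulv_cst.
Qed.

Lemma expv_cst q t a : Qmatrix q -> expv q t (@cst d a) = @cst d a.
Proof.
move=> Q; apply: functional_extensionality => i; apply: lim_eq.
have E n : sum_f_R0 (fun k => t ^ k / INR (Factorial.fact k) * mpow q k (@cst d a) i) n = a.
  elim: n => [|n IH]; first by rewrite /= /cst; lra.
  by rewrite tech5 IH mpowS_cst // /cst Rmult_0_r Rplus_0_r.
by move=> eps e0; exists 0%N => n _; rewrite E /cst /Rdist Rminus_diag Rabs_R0.
Qed.

Lemma expv0 q u : expv q 0 u = u.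
Proof. by rewrite expvE expq0 mxv1. Qed.

Lemma expv_comp q s t u : expv q s (expv q t u) = expv q (s + t) u.
Proof. by rewrite !expvE expqD mxvM. Qed.

Lemma intv0 q g : intv q 0 g = @cst d 0.
Proof.
by apply: functional_extensionality => i; rewrite intvE ?RInt_point //; exact: Rle_refl.
Qed.

Lemma intv_cst q t c : Qmatrix q -> 0 <= t -> forall i, intv q t (@cst d c) i = t * c.
Proof.
move=> Q t0 i; rewrite intvE // (RInt_ext _ (fun _ => c)).
  by rewrite RInt_const /scal /= /mult /=; lra.
by move=> x _; rewrite expv_cst.
Qed.

Lemma intv_le0 q t g : Qmatrix q -> 0 <= t -> vle g (@cst d 0) -> vle (intv q t g) (@cst d 0).
Proof.
move=> Q t0 g0 i; rewrite intvE // /cst.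
have := RInt_le _ (fun _ => 0) _ _ t0 (ex_RInt_expv q g i 0 t) (ex_RInt_const _ _ _).
rewrite RInt_const /scal /= /mult /= Rmult_0_r; apply.
by move=> x [x0 _]; have := expv_mono Q (Rlt_le _ _ x0) g0 i; rewrite expv_cst.
Qed.

(* The variation-of-constants formula: the integral over [s, s + t] is e^{sq}
   applied to the integral over [0, t]. *)
Lemma intv_flow q s t g i : 0 <= s -> 0 <= t ->
  expv q s (intv q t g) i + intv q s g i = intv q (s + t) g i.
Proof.
move=> s0 t0; rewrite !intvE //; last lra.
rewrite expvE mxvE.
under eq_bigr => j _ do rewrite intvE //.
have H j := RInt_correct _ _ _ (ex_RInt_expv q g j 0 t).
have := @is_RInt_sum _ (index_enum 'I_d) (fun j => expq q s i j) _ _ 0 t H.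
move/is_RInt_unique <-.
rewrite (RInt_ext _ (fun r => scal 1 (expv q (1 * r + s) g i))); last first.
  move=> x _; rewrite /scal /= /mult /= Rmult_1_l -mxvE -expvE expv_comp.
  by rewrite Rmult_1_l Rplus_comm.
rewrite (RInt_comp_lin (fun r => expv q r g i) 1 s 0 t); last exact: ex_RInt_expv.
rewrite Rmult_0_r Rplus_0_l Rmult_1_l (Rplus_comm t s) Rplus_comm.
have := RInt_Chasles (fun r => expv q r g i) 0 s (s + t)
  (ex_RInt_expv _ _ _ _ _) (ex_RInt_expv _ _ _ _ _).
by rewrite /plus /=.
Qed.

Variable f : mat d -> vec d.

Lemma Sq0 q u : Sq f q 0 u = u.
Proof. by apply: functional_extensionality => i; rewrite /Sq expv0 intv0 /cst Rplus_0_r. Qed.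

Lemma Sq_mono q t u v : Qmatrix q -> 0 <= t -> vle u v -> vle (Sq f q t u) (Sq f q t v).
Proof. move=> Q t0 uv i; have := expv_mono Q t0 uv i; rewrite /Sq; lra. Qed.

Lemma Sq_affine q t a u v i :
  Sq f q t (fun j => a * u j + (1 - a) * v j) i = a * Sq f q t u i + (1 - a) * Sq f q t v i.
Proof. rewrite /Sq expv_lincomb !RealsE; ring. Qed.

Lemma SqDr q t u c i : Qmatrix q -> Sq f q t (fun j => u j + c) i = Sq f q t u i + c.
Proof.
move=> Q; rewrite /Sq.
have -> : (fun j => u j + c) = (fun j => 1 * u j + c * @cst d 1 j).
  by apply: functional_extensionality => j; rewrite /cst; lra.
rewrite expv_lincomb expv_cst // /cst; lra.
Qed.

Lemma SqD q s t u : 0 <= s -> 0 <= t -> Sq f q (s + t) u = Sq f q s (Sq f q t u).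
Proof.
move=> s0 t0; apply: functional_extensionality => i; rewrite /Sq.
have -> : (fun j => expv q t u j + intv q t (f q) j) =
          (fun j => 1 * expv q t u j + 1 * intv q t (f q) j).
  by apply: functional_extensionality => j; lra.
rewrite expv_lincomb expv_comp -(intv_flow q (f q) i s0 t0); lra.
Qed.

Lemma Sq_cst_le q t a i : Qmatrix q -> 0 <= t -> vle (f q) (@cst d 0) ->
  Sq f q t (@cst d a) i <= a.
Proof. move=> Q t0 fq; rewrite /Sq expv_cst //; have := intv_le0 Q t0 fq i; rewrite /cst; lra. Qed.

Lemma Sq_cst q t a : Qmatrix q -> 0 <= t -> f q = @cst d 0 -> Sq f q t (@cst d a) = @cst d a.
Proof.
move=> Q t0 fq; apply: functional_extensionality => i.
by rewrite /Sq expv_cst // fq intv_cst // /cst Rmult_0_r Rplus_0_r.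
Qed.

End Flow.

Section Supremum.
Variables (d : nat) (A : Type) (P : A -> Prop) (g : A -> vec d) (i : 'I_d).
Hypothesis P_nonempty : exists a, P a.
Hypothesis g_bounded : exists M, forall a, P a -> g a i <= M.

Lemma supv_is_lub : is_lub (fun x => exists a, P a /\ x = g a i) (supv P g i).
Proof.
apply: (epsilon_spec (inhabits 0) (fun l => is_lub _ l)).
have [||m lub_m] := @completeness (fun x => exists a, P a /\ x = g a i); last by exists m.
  by case: g_bounded => M gM; exists M => x [a [Pa ->]]; exact: gM.
by case: P_nonempty => a Pa; exists (g a i), a.
Qed.

Lemma supv_ub a : P a -> g a i <= supv P g i.
Proof. by move=> Pa; apply: (proj1 supv_is_lub); exists a. Qed.

Lemma supv_least M : (forall a, P a -> g a i <= M) -> supv P g i <= M.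
Proof. by move=> gM; apply: (proj2 supv_is_lub) => x [a [Pa ->]]; exact: gM. Qed.

Lemma supv_approx eps : 0 < eps -> exists a, P a /\ supv P g i - eps < g a i.
Proof.
move=> e0; apply: NNPP => H.
suff : supv P g i <= supv P g i - eps by lra.
apply: supv_least => a Pa; apply: Rnot_lt_le => Hlt; apply: H; by exists a.
Qed.

End Supremum.

(* a :: l lists the points of a partition of [a, last a l]. *)
Fixpoint ascending (a : R) (l : list R) : Prop :=
  match l with
  | nil => True
  | b :: r => a < b /\ ascending b r
  end.

(* [refines a l l'] : a :: l' is obtained from a :: l by inserting points. *)
Inductive refines : R -> list R -> list R -> Prop :=
  | refines_nil a : refines a nil nil
  | refines_keep a b l l' : a < b -> refines b l l' -> refines a (b :: l) (b :: l')
  | refines_insert a x b l l' :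
      a < x -> x < b -> refines x (b :: l) l' -> refines a (b :: l) (x :: l').

Lemma ascending_last a l : ascending a l -> a <= last a l.
Proof.
elim: l a => [|b r IH] a /=; first by move=> _; exact: Rle_refl.
by move=> [ab /IH Hl]; lra.
Qed.

Lemma ascending_cat a l1 l2 :
  ascending a (l1 ++ l2) <-> ascending a l1 /\ ascending (last a l1) l2.
Proof.
elim: l1 a => [|b r IH] a /=; first by split => [H|[_ H]].
by rewrite IH; split => [[? [? ?]]|[[? ?] ?]].
Qed.

Lemma ascending_shift a c l :
  ascending a l -> ascending (a + c) (map (fun x => x + c) l).
Proof. by elim: l a => [|b r IH] a //= [ab /IH Hr]; split => //; lra. Qed.

Lemma last_shift a c l : last (a + c) (map (fun x => x + c) l) = last a l + c.
Proof. by elim: l a => [|b r IH] a //=. Qed.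

Lemma refines_refl a l : ascending a l -> refines a l l.
Proof.
elim: l a => [|b r IH] a /=; first by move=> _; exact: refines_nil.
by move=> [ab /IH Hr]; exact: refines_keep.
Qed.

Lemma refines_ascending a l l' : refines a l l' -> ascending a l'.
Proof. by elim => {a l l'} //= *; split. Qed.

Lemma refines_last a l l' : refines a l l' -> last a l' = last a l.
Proof. by elim => {a l l'} //= *. Qed.

Lemma common_refinement a l1 l2 : ascending a l1 -> ascending a l2 ->
  last a l1 = last a l2 -> exists l3, refines a l1 l3 /\ refines a l2 l3.
Proof.
move: {2}(size l1 + size l2)%N (leqnn (size l1 + size l2)) => n.
elim: n a l1 l2 => [|n IH] a [|b1 r1] [|b2 r2] //= Hn.
- by move=> _ _ _; exists nil; split; exact: refines_nil.
- by move=> _ _ _; exists nil; split; exact: refines_nil.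
- by move=> _ [ab /ascending_last Hl] E; lra.
- by move=> [ab /ascending_last Hl] _ E; lra.
move=> [ab1 H1] [ab2 H2] E.
case: (Rtotal_order b1 b2) => [lt|[eq|gt]].
- have [|l3 [R1 R2]] := IH b1 r1 (b2 :: r2) _ H1 (conj lt H2) E; first by move: Hn => /=; lia.
  by exists (b1 :: l3); split; [exact: refines_keep | exact: refines_insert].
- subst b2; have [|l3 [R1 R2]] := IH b1 r1 r2 _ H1 H2 E; first by lia.
  by exists (b1 :: l3); split; exact: refines_keep.
- have [|l3 [R1 R2]] := IH b2 (b1 :: r1) r2 _ (conj gt H1) H2 E; first by move: Hn => /=; lia.
  by exists (b2 :: l3); split; [exact: refines_insert | exact: refines_keep].
Qed.

Lemma refines_split a l s : ascending a l -> a < s -> s <= last a l ->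
  exists l1 l2, refines a l (l1 ++ l2) /\ last a l1 = s.
Proof.
elim: l a => [|b r IH] a /=; first by move=> _; lra.
move=> [ab Hr] as0 sl.
case: (Rtotal_order b s) => [lt|[eq|gt]].
- have [l1 [l2 [R1 E]]] := IH b Hr lt sl.
  by exists (b :: l1), l2; split => //; exact: refines_keep.
- exists [:: b], r; split => //.
  by apply: refines_keep => //; exact: refines_refl.
- exists [:: s], (b :: r); split => //.
  by apply: refines_insert => //; apply: refines_refl.
Qed.

Lemma Sorted_ascending a l : Sorted Rlt (a :: l) <-> ascending a l.
Proof.
elim: l a => [|b r IH] a /=.
  by split=> // _; apply: Sorted_cons; [exact: Sorted_nil | exact: HdRel_nil].
split=> [H|[ab /IH Hr]]; last by apply: Sorted_cons => //; exact: HdRel_cons.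
have [Hs Hh] := Sorted_inv H; split; [exact: HdRel_inv Hh | exact/IH].
Qed.

Lemma in_PtP t pi :
  in_Pt t pi <-> exists l, pi = 0 :: l /\ ascending 0 l /\ last 0 l = t.
Proof.
split=> [|[l [-> [Hl Ll]]]]; last by split; [exact/Sorted_ascending | split].
case: pi => [|a l] [Hs [/= Ha Hl]]; first lra.
by subst a; exists l; split => //; split => //; exact/Sorted_ascending.
Qed.

Section Nisio.
Variables (d : nat) (P : mat d -> Prop) (f : mat d -> vec d).
Hypothesis P_Qmatrix : forall q, P q -> Qmatrix q.
Variable q0 : mat d.
Hypothesis P_q0 : P q0.
Hypothesis f_q0 : f q0 = @cst d 0.
Hypothesis f_le0 : forall q, P q -> vle (f q) (@cst d 0).

Implicit Types (u v : vec d).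

Lemma Sq_le_vnorm q h u i : P q -> 0 <= h -> Sq f q h u i <= vnorm u.
Proof.
move=> Pq h0; apply: Rle_trans (Sq_mono f (P_Qmatrix Pq) h0 (vle_vnorm u) i) _.
exact: Sq_cst_le (P_Qmatrix Pq) h0 (f_le0 Pq).
Qed.

Lemma Eh_ub q h u : P q -> 0 <= h -> vle (Sq f q h u) (Eh P f h u).
Proof.
move=> Pq h0 i; apply: supv_ub Pq; first by exists q0.
by exists (vnorm u) => q' Pq'; exact: Sq_le_vnorm.
Qed.

Lemma Eh_least h u v : 0 <= h -> (forall q, P q -> vle (Sq f q h u) v) -> vle (Eh P f h u) v.
Proof.
move=> h0 H i; apply: supv_least => [||q Pq]; [by exists q0 | | exact: H].
by exists (vnorm u) => q' Pq'; exact: Sq_le_vnorm.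
Qed.

Lemma Eh_mono h u v : 0 <= h -> vle u v -> vle (Eh P f h u) (Eh P f h v).
Proof.
move=> h0 uv; apply: Eh_least => // q Pq i.
apply: Rle_trans (Sq_mono f (P_Qmatrix Pq) h0 uv i) _; exact: Eh_ub.
Qed.

Lemma EhDr h u c : 0 <= h -> Eh P f h (fun j => u j + c) = fun i => Eh P f h u i + c.
Proof.
move=> h0; apply: functional_extensionality => i; apply: Rle_antisym.
- apply: (Eh_least (v := fun i => Eh P f h u i + c)) => // q Pq j.
  have Qq := P_Qmatrix Pq; rewrite SqDr //; have := Eh_ub u Pq h0 j; lra.
- suff H : vle (Eh P f h u) (fun j => Eh P f h (fun j => u j + c) j - c).
    by have := H i; lra.
  apply: Eh_least => // q Pq j.
  have Qq := P_Qmatrix Pq; have := Eh_ub (fun j => u j + c) Pq h0 j; rewrite SqDr //; lra.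
Qed.

Lemma Eh_cst h a : 0 <= h -> Eh P f h (@cst d a) = @cst d a.
Proof.
move=> h0; apply: functional_extensionality => i; apply: Rle_antisym.
  apply: (Eh_least (v := @cst d a)) => // q Pq j.
  exact: Sq_cst_le (P_Qmatrix Pq) h0 (f_le0 Pq).
have Qq0 := P_Qmatrix P_q0.
by have := Eh_ub (@cst d a) P_q0 h0 i; rewrite Sq_cst.
Qed.

Lemma Eh_convex h u v lam i : 0 <= h -> 0 <= lam <= 1 ->
  Eh P f h (fun j => lam * u j + (1 - lam) * v j) i
    <= lam * Eh P f h u i + (1 - lam) * Eh P f h v i.
Proof.
move=> h0 lam01.
apply: (Eh_least (v := fun i => lam * Eh P f h u i + (1 - lam) * Eh P f h v i)) => // q Pq j.
rewrite Sq_affine; apply: Rplus_le_compat; apply: Rmult_le_compat_l; try lra; exact: Eh_ub.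
Qed.

Lemma EhD_le s t u : 0 <= s -> 0 <= t -> vle (Eh P f (s + t) u) (Eh P f s (Eh P f t u)).
Proof.
move=> s0 t0; apply: Eh_least; first lra.
move=> q Pq i; rewrite SqD //.
apply: Rle_trans (Sq_mono f (P_Qmatrix Pq) s0 (Eh_ub u Pq t0) i) _; exact: Eh_ub.
Qed.

Lemma Eh0 u : Eh P f 0 u = u.
Proof.
apply: functional_extensionality => i; apply: Rle_antisym.
  by apply: (Eh_least (v := u)) => [|q Pq j]; rewrite ?Sq0; exact: Rle_refl.
by have := Eh_ub u P_q0 (Rle_refl 0) i; rewrite Sq0.
Qed.

Lemma Echain_mono a l u v : ascending a l -> vle u v ->
  vle (Echain P f a l u) (Echain P f a l v).
Proof. by elim: l a => [|b r IH] a //= [ab /IH Hr] /Hr; apply: Eh_mono; lra. Qed.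

Lemma EchainDr a l u c : ascending a l ->
  Echain P f a l (fun j => u j + c) = fun i => Echain P f a l u i + c.
Proof. by elim: l a => [|b r IH] a //= [ab /IH ->]; apply: EhDr; lra. Qed.

Lemma Echain_cst a l c : ascending a l -> Echain P f a l (@cst d c) = @cst d c.
Proof. by elim: l a => [|b r IH] a //= [ab /IH ->]; apply: Eh_cst; lra. Qed.

Lemma Echain_convex a l u v lam : ascending a l -> 0 <= lam <= 1 -> forall i,
  Echain P f a l (fun j => lam * u j + (1 - lam) * v j) i <=
  lam * Echain P f a l u i + (1 - lam) * Echain P f a l v i.
Proof.
move=> + lam01; elim: l a => [|b r IH] a /=; first by move=> _ i; exact: Rle_refl.
move=> [ab Hr] i; have ba : 0 <= b - a by lra.
apply: Rle_trans (Eh_mono ba (IH b Hr) i) _; exact: Eh_convex.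
Qed.

Lemma Echain_cat a l1 l2 u :
  Echain P f a (l1 ++ l2) u = Echain P f a l1 (Echain P f (last a l1) l2 u).
Proof. by elim: l1 a => [|b r IH] a //=; rewrite IH. Qed.

Lemma Echain_shift a c l u :
  Echain P f (a + c) (map (fun x => x + c) l) u = Echain P f a l u.
Proof.
elim: l a => [|b r IH] a //=; rewrite IH.
by have -> : b + c - (a + c) = b - a by lra.
Qed.

Lemma Echain_refines a l l' u : refines a l l' -> vle (Echain P f a l u) (Echain P f a l' u).
Proof.
elim => {a l l'} [a|a b l l' ab _ IH|a x b l l' ax xb _ IH] /=.
- by move=> i; exact: Rle_refl.
- by apply: Eh_mono => //; lra.
- have h1 : 0 <= x - a by lra.
  have h2 : 0 <= b - x by lra.
  move=> i; have -> : b - a = (x - a) + (b - x) by lra.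
  apply: Rle_trans (EhD_le (Echain P f b l u) h1 h2 i) _; exact: Eh_mono h1 IH i.
Qed.

Lemma Epi_cons0 l u : Epi P f (0 :: l) u = Echain P f 0 l u.
Proof. by case: l => [|b r] //=; exact: Eh0. Qed.

Lemma in_Pt_exists t : 0 <= t -> exists pi, in_Pt t pi.
Proof.
move=> t0; case: (Req_dec t 0) => [->|tn]; first by exists [:: 0]; apply/in_PtP; exists nil.
by exists [:: 0; t]; apply/in_PtP; exists [:: t]; split => //=; split => //; split => //; lra.
Qed.

Lemma Epi_bounded t u i : exists M, forall pi, in_Pt t pi -> Epi P f pi u i <= M.
Proof.
exists (vnorm u) => pi /in_PtP [l [-> [Hl _]]]; rewrite Epi_cons0.
by have := Echain_mono Hl (vle_vnorm u) i; rewrite Echain_cst.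
Qed.

Lemma Nisio_ub t u i l : ascending 0 l -> last 0 l = t -> Echain P f 0 l u i <= Nisio P f t u i.
Proof.
move=> Hl Ll; have t0 : 0 <= t by rewrite -Ll; exact: ascending_last.
rewrite -Epi_cons0.
apply: (@supv_ub d _ (in_Pt t) (fun pi => Epi P f pi u) i (in_Pt_exists t0) (Epi_bounded t u i)).
by apply/in_PtP; exists l.
Qed.

Lemma Nisio_least t u i M : 0 <= t ->
  (forall l, ascending 0 l -> last 0 l = t -> Echain P f 0 l u i <= M) -> Nisio P f t u i <= M.
Proof.
move=> t0 H.
apply: (@supv_least d _ (in_Pt t) (fun pi => Epi P f pi u) i
  (in_Pt_exists t0) (Epi_bounded t u i)).
by move=> pi /in_PtP [l [-> [Hl Ll]]]; rewrite Epi_cons0; exact: H.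
Qed.

Lemma Nisio_approx t u i eps : 0 <= t -> 0 < eps ->
  exists l, ascending 0 l /\ last 0 l = t /\ Nisio P f t u i - eps < Echain P f 0 l u i.
Proof.
move=> t0 e0; have [pi [/in_PtP [l [-> [Hl Ll]]]]] :=
  @supv_approx d _ (in_Pt t) (fun pi => Epi P f pi u) i
    (in_Pt_exists t0) (Epi_bounded t u i) eps e0.
by rewrite Epi_cons0 => H; exists l.
Qed.

(* The supremum of a finite family of coordinates is nearly attained by one
   partition: take a common refinement of coordinatewise near-maximizers. *)
Lemma Nisio_approx_uniform t u eps : 0 <= t -> 0 < eps ->
  exists l, ascending 0 l /\ last 0 l = t /\
    forall j, Nisio P f t u j - eps < Echain P f 0 l u j.
Proof.
move=> t0 e0.
suff [l [Hl [Ll Hj]]] : exists l, ascending 0 l /\ last 0 l = t /\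
    forall j, j \in enum 'I_d -> Nisio P f t u j - eps < Echain P f 0 l u j.
  by exists l; split => //; split => // j; apply: Hj; rewrite mem_enum.
elim: (enum 'I_d) => [|j r [l [Hl [Ll Hr]]]].
  by have [pi /in_PtP [l [_ [Hl Ll]]]] := in_Pt_exists t0; exists l.
have [lj [Hlj [Llj Hj]]] := Nisio_approx u j t0 e0.
have [|l3 [R1 R2]] := common_refinement Hl Hlj; first by rewrite Ll Llj.
exists l3; split; first exact: refines_ascending R1.
split; first by rewrite (refines_last R1).
move=> k; rewrite in_cons => /orP [/eqP -> | kr].
  exact: Rlt_le_trans Hj (Echain_refines u R2 j).
exact: Rlt_le_trans (Hr k kr) (Echain_refines u R1 k).
Qed.

Lemma Nisio0 u : Nisio P f 0 u = u.
Proof.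
apply: functional_extensionality => i; apply: Rle_antisym.
  apply: Nisio_least => [|[|b r] //= Hl Ll]; try exact: Rle_refl.
  by case: Hl => b0 /ascending_last; lra.
by have := @Nisio_ub 0 u i nil I erefl.
Qed.

Lemma Nisio_kernel t : 0 <= t -> is_kernel (Nisio P f t).
Proof.
move=> t0; split=> [u v uv i|a].
  apply: Nisio_least => // l Hl Ll.
  apply: Rle_trans (Echain_mono Hl uv i) _; exact: Nisio_ub.
apply: functional_extensionality => i; apply: Rle_antisym.
  by apply: Nisio_least => // l Hl Ll; rewrite Echain_cst //; exact: Rle_refl.
have [pi /in_PtP [l [_ [Hl Ll]]]] := in_Pt_exists t0.
by have := @Nisio_ub t (@cst d a) i l Hl Ll; rewrite Echain_cst.
Qed.

Lemma Nisio_convex t : 0 <= t -> is_convex_map (Nisio P f t).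
Proof.
move=> t0 u v lam lam01 i; apply: Nisio_least => // l Hl Ll.
apply: Rle_trans (Echain_convex u v Hl lam01 i) _.
apply: Rplus_le_compat; apply: Rmult_le_compat_l; try lra; exact: Nisio_ub.
Qed.

(* Refine a partition of [0, s + t] so that it contains s, then bound the part
   after s (shifted back to [0, t]) by S(t). *)
Lemma NisioD_le s t u : 0 <= s -> 0 <= t ->
  vle (Nisio P f (s + t) u) (Nisio P f s (Nisio P f t u)).
Proof.
move=> s0 t0 i; apply: Nisio_least; first lra.
move=> l Hl Ll; case: (Req_dec s 0) => [s_eq0|s_neq0].
  by subst s; rewrite Nisio0; apply: Nisio_ub; rewrite // Ll; lra.
have s_pos : 0 < s by lra.
have s_le : s <= last 0 l by rewrite Ll; lra.
have [l1 [l2 [Rl Ls]]] := refines_split Hl s_pos s_le.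
have /ascending_cat [H1 H2] := refines_ascending Rl; rewrite Ls in H2.
have Lst : last s l2 = s + t by rewrite -Ll -(refines_last Rl) last_cat Ls.
apply: Rle_trans (Echain_refines u Rl i) _.
rewrite Echain_cat Ls -(Echain_shift s (- s)) Rplus_opp_r.
have Hv : vle (Echain P f 0 (map (fun x => x + - s) l2) u) (Nisio P f t u).
  move=> j; apply: Nisio_ub.
    by have := ascending_shift (- s) H2; rewrite Rplus_opp_r.
  by have := last_shift s (- s) l2; rewrite Rplus_opp_r Lst => ->; lra.
apply: Rle_trans (Echain_mono H1 Hv i) _; exact: Nisio_ub.
Qed.

(* Concatenate a partition of [0, s] with one of [0, t] that nearly attains
   S(t) u in every coordinate, shifted to [s, s + t]. *)
Lemma NisioD_ge s t u : 0 <= s -> 0 <= t ->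
  vle (Nisio P f s (Nisio P f t u)) (Nisio P f (s + t) u).
Proof.
move=> s0 t0 i; apply: le_epsilon => eps e0.
have [l2 [H2 [L2 Hw]]] := Nisio_approx_uniform u t0 e0.
apply: Nisio_least => // l1 H1 L1.
have Hv : vle (Nisio P f t u) (fun j => Echain P f 0 l2 u j + eps).
  by move=> j; have := Hw j; lra.
apply: Rle_trans (Echain_mono H1 Hv i) _; rewrite EchainDr //.
apply: Rplus_le_compat_r.
rewrite -(Echain_shift 0 s l2) Rplus_0_l.
have := Echain_cat 0 l1 (map (fun x => x + s) l2) u; rewrite L1 => <-.
apply: Nisio_ub.
  by apply/ascending_cat; rewrite L1; split => //; have := ascending_shift s H2; rewrite Rplus_0_l.
by rewrite last_cat L1; have := last_shift 0 s l2; rewrite Rplus_0_l L2 => ->; lra.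
Qed.

Lemma NisioD s t u : 0 <= s -> 0 <= t -> Nisio P f (s + t) u = Nisio P f s (Nisio P f t u).
Proof.
move=> s0 t0; apply: functional_extensionality => i.
by apply: Rle_antisym; [exact: NisioD_le | exact: NisioD_ge].
Qed.

Lemma Nisio_dominates : dominates P f (Nisio P f).
Proof.
move=> t u q t0 Pq i; case: (Req_dec t 0) => [->|tn].
  by rewrite Sq0 Nisio0; exact: Rle_refl.
apply: Rle_trans _ (@Nisio_ub t u i [:: t] (conj (_ : 0 < t) I) erefl); last lra.
by rewrite /= Rminus_0_r; exact: Eh_ub.
Qed.

Lemma Echain_le_semigroup (T : R -> vec d -> vec d) : is_semigroup T -> dominates P f T ->
  forall a l u, ascending a l -> vle (Echain P f a l u) (T (last a l - a) u).
Proof.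
move=> [T0 TD] Tdom a l u; elim: l a => [|b r IH] a /=.
  by move=> _ j; rewrite Rminus_diag T0; exact: Rle_refl.
move=> [ab Hr] j.
have hb : 0 <= b - a by lra.
have hl : 0 <= last b r - b by have := ascending_last Hr; lra.
apply: Rle_trans (Eh_mono hb (IH b Hr) j) _.
have -> : last b r - a = (b - a) + (last b r - b) by lra.
by rewrite TD //; apply: Eh_least => // q Pq k; exact: Tdom.
Qed.

Lemma Nisio_le_semigroup (T : R -> vec d -> vec d) : is_semigroup T -> dominates P f T ->
  forall t u, 0 <= t -> vle (Nisio P f t u) (T t u).
Proof.
move=> Tsg Tdom t u t0 i; apply: Nisio_least => // l Hl Ll.
by have := Echain_le_semigroup Tsg Tdom u Hl i; rewrite Ll Rminus_0_r.
Qed.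

End Nisio.

Theorem mainTheorem8 (d : nat) (P : mat d -> Prop) (f : mat d -> vec d)
  (hQ : forall q, P q -> Qmatrix q)
  (hf0 : exists q0, P q0 /\ f q0 = @cst d 0)
  (hfle : forall q, P q -> vle (f q) (@cst d 0))
  (hfin : forall (u : vec d) (i : 'I_d),
            bound (fun x => exists q, P q /\ x = mulv q u i + f q i)) :
  (forall t, 0 <= t -> is_kernel (Nisio P f t) /\ is_convex_map (Nisio P f t)) /\
  (forall u, Nisio P f 0 u = u) /\
  (forall s t, 0 <= s -> 0 <= t ->
     forall u, Nisio P f (s + t) u = Nisio P f s (Nisio P f t u)) /\
  is_semigroup_envelope P f (Nisio P f).
Proof.
have [q0 [Pq0 fq0]] := hf0.
have N0 := Nisio0 hQ Pq0 fq0 hfle.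
have ND := NisioD hQ Pq0 fq0 hfle.
split; first by move=> t t0; split;
  [exact: (Nisio_kernel hQ Pq0 fq0 hfle) | exact: (Nisio_convex hQ Pq0 fq0 hfle)].
split; first exact: N0.
split; first by move=> s t s0 t0 u; exact: ND.
split; first by split; [exact: N0 | move=> s t s0 t0 u; exact: ND].
split; [exact: (Nisio_dominates hQ Pq0 fq0 hfle) | exact: (Nisio_le_semigroup hQ Pq0 fq0 hfle)].
Qed.
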